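(* Let $A$ be a commutative ring, $S=A[x_0,\dots,x_d]$, and identify $P_{S|A}=S\otimes_AS$ with $A[\boldsymbol{x},\boldsymbol{y}]$ where $x_i=x_i\otimes1$, $y_i=1\otimes x_i$. For each $n\geqslant0$, let $\Delta^{[n+1]}_{S|A}=((y_0-x_0)^{n+1},\dots,(y_d-x_d)^{n+1})$ and $P^{[n]}_{S|A}=P_{S|A}/\Delta^{[n+1]}_{S|A}$. Then the maps \[ H^{d+1}(\Delta^{[n+1]}_{S|A};\,P_{S|A})\xrightarrow{\ \gamma_n\ }\operatorname{Hom}_S(P^{[n]}_{S|A},S)\xrightarrow{\ \varrho^*\ } D^{[n]}_{S|A} \] are isomorphisms of $P_{S|A}$-modules.
   Context: $H^{d+1}(\Delta^{[n+1]}_{S|A};P_{S|A})$ is the top Koszul cohomology on the elements $(y_i-x_i)^{n+1}$, which equals $P^{[n]}_{S|A}$. $P_{S|A}$ is an $S$-module via $s\mapsto s\otimes1$; $P^{[n]}_{S|A}$ is a free $S$-module with basis $(y_0-x_0)^{a_0}\cdots(y_d-x_d)^{a_d}$, $0\le a_i\le n$, and $\operatorname{Hom}_S(P^{[n]}_{S|A},S)$ has the dual basis, denoted $(\cdot)^\star$. The map $\gamma_n$ is the $S$-linear map sending $(y_0-x_0)^{a_0}\cdots(y_d-x_d)^{a_d}$ to $\big((y_0-x_0)^{n-a_0}\cdots(y_d-x_d)^{n-a_d}\big)^\star$. $P_{S|A}$ acts on $\operatorname{End}_A(S)$ and on $\operatorname{Hom}_S(P^{[n]}_{S|A},S)$ via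 $(s_1\otimes s_2)\cdot\delta=\tilde s_1\circ\delta\circ\tilde s_2$ (resp. the natural action). $D^{[n]}_{S|A}$ is the set of elements of $\operatorname{End}_A(S)$ annihilated by $\Delta^{[n+1]}_{S|A}$ under this action. $\varrho:S\to P^{[n]}_{S|A}$ is $s\mapsto 1\otimes s$, and $\varrho^*(\delta)=\delta\circ\varrho$. *)

From HB Require Import structures.
From mathcomp Require Import all_boot all_order all_algebra.
From mathcomp Require Import mpoly.
Set Implicit Arguments. Unset Strict Implicit. Unset Printing Implicit Defensive.
Import GRing.Theory.
Local Open Scope ring_scope.

(* Conventions.  k = d+1 is the number of variables x_0,...,x_d.
   S  = A[x_0..x_d]                       : {mpoly A[k]}
   P  = S (x) _A S = A[x,y] realised as S[y_0..y_d] : {mpoly S[k]},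
        with x_i = ('X_i : S)%:MP (a coefficient) and y_i = 'X_i.
   The S-module structure of P via s |-> s (x) 1 is coefficient scaling
   ( *: ), i.e. multiplication by s(x). *)

Notation Spoly A k := {mpoly A[k]}.
Notation Ppoly A k := {mpoly {mpoly A[k]}[k]}.

Section Defs.
Context (A : comRingType) (k : nat).

Definition xP (i : 'I_k) : Ppoly A k := ('X_i : Spoly A k)%:MP.
Definition yP (i : 'I_k) : Ppoly A k := 'X_i.

Definition inDelta (n : nat) (p : Ppoly A k) : Prop :=
  exists c : 'I_k -> Ppoly A k,
    p = \sum_(i < k) c i * (yP i - xP i) ^+ n.+1.

Definition rho (s : Spoly A k) : Ppoly A k :=
  mmap (fun a : A => (a%:MP : Spoly A k)%:MP) (fun i => yP i) s.

(* change of variables: q(x,y) |-> q(x, y + x); the coefficient of y^b in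
   tau q (as an element of S) is the coefficient of (y-x)^b in q. *)
Definition tau (q : Ppoly A k) : Ppoly A k :=
  mmap (fun c : Spoly A k => c%:MP) (fun i => yP i + xP i) q.

Definition mcompl (n : nat) (a : 'X_{1..k}) : 'X_{1..k} :=
  [multinom (n - a i)%N | i < k].

(* gamma_n : P^[n] -> Hom_S(P^[n], S), the S-linear map sending
   (y-x)^a to ((y-x)^(n-a))^*, for 0 <= a_i <= n; written on representatives
   p in P of classes of P^[n] (p = sum_a s_a (y-x)^a mod Delta^[n+1] with
   s_a = (tau p)@_a), and with homomorphisms realised as maps P -> S. *)
Definition gamma (n : nat) (p : Ppoly A k) : Ppoly A k -> Spoly A k :=
  fun q => \sum_(a <- msupp (tau p) | [forall i, (a i <= n)%N])
              (tau p)@_a * (tau q)@_(mcompl n a).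

(* Hom_S(P^[n], S), realised as the S-linear maps P -> S vanishing on
   Delta^[n+1] (S acting on P via s |-> s (x) 1). *)
Definition SHom (n : nat) (phi : Ppoly A k -> Spoly A k) : Prop :=
  (forall (c : Spoly A k) (p q : Ppoly A k), phi (c *: p + q) = c * phi p + phi q)
  /\ (forall p, inDelta n p -> phi p = 0).

Definition actHom (p : Ppoly A k) (phi : Ppoly A k -> Spoly A k) :
  Ppoly A k -> Spoly A k := fun q => phi (p * q).

Definition Alinear (delta : Spoly A k -> Spoly A k) : Prop :=
  forall (a : A) (s t : Spoly A k), delta (a *: s + t) = a *: delta s + delta t.

(* P-action on End_A(S): (s1 (x) s2) . delta = s1 o delta o s2; for
   p = sum_m c_m(x) y^m this is  s |-> sum_m c_m * delta (x^m * s). *)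
Definition actEnd (p : Ppoly A k) (delta : Spoly A k -> Spoly A k) :
  Spoly A k -> Spoly A k :=
  fun s => \sum_(m <- msupp p) p@_m * delta ('X_[m] * s).

Definition Dn (n : nat) (delta : Spoly A k -> Spoly A k) : Prop :=
  Alinear delta /\
  (forall p, inDelta n p -> forall s, actEnd p delta s = 0).

Definition rhostar (phi : Ppoly A k -> Spoly A k) : Spoly A k -> Spoly A k :=
  fun s => phi (rho s).

End Defs.

(* After the change of variables tau : y |-> y + x, an automorphism of
   P = S[y], the ideal Delta^[n+1] becomes the monomial ideal
   (y_0^(n+1), ..., y_d^(n+1)), and every element of P is congruent modulo it
   to its truncation to the exponents a <= (n, ..., n).  Hence gamma_n p q is
   the coefficient of y^(n,...,n) in tau (p q): a perfect pairing on P^[n] for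
   which the classes of tau^-1 (y^a) and tau^-1 (y^((n,...,n) - a)) are dual
   bases.  An S-linear form on P is determined by its values on the monomials
   y^m = varrho (x^m), so varrho^* is injective; conversely an A-linear delta
   killed by Delta^[n+1] is varrho^* of the form q |-> (q . delta)(1). *)

From HB Require Import structures.
From mathcomp Require Import all_boot all_order all_algebra.
From mathcomp Require Import mpoly.
From mathcomp.multinomials Require Import ssrcomplements.
From mathcomp Require Import bigenough.
Set Implicit Arguments. Unset Strict Implicit. Unset Printing Implicit Defensive.
Import GRing.Theory BigEnough.
Local Open Scope ring_scope.

Lemma mpoly_rmorph_eq (n : nat) (R T : nzRingType)
    (g h : {rmorphism {mpoly R[n]} -> T}) :
  (forall c, g c%:MP = h c%:MP) -> (forall i, g 'X_i = h 'X_i) -> g =1 h.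
Proof.
move=> eqC eqX p; rewrite [p]mpolyE !rmorph_sum; apply: eq_bigr => m _.
rewrite -mul_mpolyC !rmorphM eqC mpolyXE_id !rmorph_prod; congr (_ * _).
by apply: eq_bigr => i _; rewrite !rmorphXn eqX.
Qed.

Section Shift.
Context (R : comNzRingType) (k : nat).

Definition mshift (v : 'I_k -> R) (p : {mpoly R[k]}) : {mpoly R[k]} :=
  mmap (@mpolyC k R) (fun i => 'X_i + (v i)%:MP) p.

Variable v : 'I_k -> R.

HB.instance Definition _ := GRing.RMorphism.copy (mshift v)
  (mmap (@mpolyC k R) (fun i => 'X_i + (v i)%:MP)).

Lemma mshiftC c : mshift v c%:MP = c%:MP.
Proof. exact: mmapC. Qed.

Lemma mshiftX i : mshift v 'X_i = 'X_i + (v i)%:MP.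
Proof. by rewrite /mshift mmapX mmap1U. Qed.

Lemma mshiftZ c p : mshift v (c *: p) = c *: mshift v p.
Proof. by rewrite -mul_mpolyC rmorphM /= mshiftC mul_mpolyC. Qed.

End Shift.

Lemma mshiftK (R : comNzRingType) (k : nat) (v w : 'I_k -> R) :
  (forall i, w i = - v i) -> cancel (mshift v) (mshift w).
Proof.
move=> wE; apply: (@mpoly_rmorph_eq _ _ _ (mshift w \o mshift v) idfun) => [c|i] /=.
  by rewrite !mshiftC.
by rewrite mshiftX rmorphD /= !mshiftC mshiftX -addrA -mpolyCD wE addNr mpolyC0 addr0.
Qed.

Section MonomialBox.
Context (k n : nat).

Definition mtop : 'X_{1..k} := [multinom n | i < k].

Lemma lem_mtop (a : 'X_{1..k}) : (a <= mtop)%MM = [forall i, (a i <= n)%N].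
Proof. by apply/mnm_lepP/forallP => le_a i; move: (le_a i); rewrite mnmE. Qed.

Lemma mtop_subK (a : 'X_{1..k}) : (a <= mtop)%MM -> (mtop - (mtop - a))%MM = a.
Proof.
rewrite lem_mtop => /forallP le_a; apply/mnmP => i.
by rewrite !mnmBE mnmE subKn.
Qed.

Lemma mcompl_mtop (a : 'X_{1..k}) : mcompl n a = (mtop - a)%MM.
Proof. by apply/mnmP => i; rewrite mnmBE !mnmE. Qed.

Definition box := {ffun 'I_k -> 'I_n.+1}.

Definition mnm_of_box (f : box) : 'X_{1..k} := [multinom (f i : nat) | i < k].

Lemma mnm_of_box_le f : (mnm_of_box f <= mtop)%MM.
Proof. by apply/mnm_lepP => i; rewrite !mnmE -ltnS. Qed.

Lemma mnm_of_box_inj : injective mnm_of_box.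
Proof.
move=> f g /mnmP eq_fg; apply/ffunP => i; apply/val_inj.
by have := eq_fg i; rewrite !mnmE.
Qed.

Lemma mnm_of_boxK (a : 'X_{1..k}) :
  (a <= mtop)%MM -> mnm_of_box [ffun i => inord (a i)] = a.
Proof.
rewrite lem_mtop => /forallP le_a; apply/mnmP => i.
by rewrite mnmE ffunE inordK // ltnS.
Qed.

End MonomialBox.

Section MonomialIdeal.
Context (R : comNzRingType) (k n : nat).
Implicit Types (t : {mpoly R[k]}) (a m : 'X_{1..k}).

Lemma mcoeffMX_if t a m :
  (t * 'X_[a])@_m = if (a <= m)%MM then t@_(m - a) else 0.
Proof.
case: ifP => [le_am|not_le_am]; first by rewrite -[m in LHS](submK le_am) addmC mcoeffMX.
rewrite [t]mpolyE mulr_suml raddf_sum /= big1 // => b _.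
rewrite -scalerAl -mpolyXD mcoeffZ mcoeffX.
case: eqP => [eq_m|]; last by rewrite mulr0.
by rewrite -eq_m lem_addl in not_le_am.
Qed.

Definition Xpow_ideal t : Prop :=
  exists c : 'I_k -> {mpoly R[k]}, t = \sum_(i < k) c i * 'X_i ^+ n.+1.

Lemma Xpow_ideal0 : Xpow_ideal 0.
Proof. by exists (fun=> 0); rewrite big1 // => i _; rewrite mul0r. Qed.

Lemma Xpow_idealD t1 t2 : Xpow_ideal t1 -> Xpow_ideal t2 -> Xpow_ideal (t1 + t2).
Proof.
case=> [c1 ->] [c2 ->]; exists (fun i => c1 i + c2 i); rewrite -big_split.
by apply: eq_bigr => i _; rewrite mulrDl.
Qed.

Lemma Xpow_idealMl r t : Xpow_ideal t -> Xpow_ideal (r * t).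
Proof.
case=> c ->; exists (fun i => r * c i); rewrite mulr_sumr.
by apply: eq_bigr => i _; rewrite mulrA.
Qed.

Lemma Xpow_ideal_Xn i : Xpow_ideal ('X_i ^+ n.+1).
Proof.
exists (fun j => (j == i)%:R); rewrite (bigD1 i) //= eqxx mul1r big1 ?addr0 //.
by move=> j /negbTE ->; rewrite mul0r.
Qed.

Lemma Xpow_idealP t : Xpow_ideal t <-> forall a, (a <= mtop k n)%MM -> t@_a = 0.
Proof.
split=> [[c ->] a | box0].
  rewrite lem_mtop => /forallP le_a; rewrite raddf_sum /= big1 // => i _.
  rewrite mpolyXn mcoeffMX_if ifF //; apply/negP => /mnm_lepP/(_ i).
  by rewrite mulmnE mnm1E eqxx mul1n leqNgt ltnS le_a.
rewrite [t]mpolyE; apply: (big_ind Xpow_ideal Xpow_ideal0 Xpow_idealD) => m _.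
have [/existsP[i lt_n_mi] | /existsPn le_m] := boolP [exists i, (n < m i)%N].
  have le_Xi : (U_(i) *+ n.+1 <= m)%MM.
    apply/mnm_lepP => j; rewrite mulmnE mnm1E.
    by case: eqP => [<-|_]; rewrite ?mul1n ?mul0n.
  rewrite -(submK le_Xi) mpolyXD scalerAl -mpolyXn.
  exact/Xpow_idealMl/Xpow_ideal_Xn.
rewrite box0 ?scale0r; first exact: Xpow_ideal0.
by rewrite lem_mtop; apply/forallP => i; rewrite leqNgt le_m.
Qed.

Definition mtrunc t : {mpoly R[k]} :=
  \sum_(f : box k n) t@_(mnm_of_box f) *: 'X_[mnm_of_box f].

Lemma mcoeff_mtrunc t a : (a <= mtop k n)%MM -> (mtrunc t)@_a = t@_a.
Proof.
move=> le_a; rewrite raddf_sum (bigD1 [ffun i => inord (a i)]) //= mnm_of_boxK //.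
rewrite mcoeffZ mcoeffX eqxx mulr1 big1 ?addr0 // => f ne_f.
rewrite mcoeffZ mcoeffX; case: eqP => [eq_fa|]; last by rewrite mulr0.
by rewrite -(mnm_of_boxK le_a) in eq_fa; rewrite (mnm_of_box_inj eq_fa) eqxx in ne_f.
Qed.

Lemma Xpow_ideal_mtrunc t : Xpow_ideal (t - mtrunc t).
Proof. by apply/Xpow_idealP => a le_a; rewrite mcoeffB mcoeff_mtrunc ?subrr. Qed.

End MonomialIdeal.

Section Gamma.
Context (A : comNzRingType) (k n : nat).
Local Notation S := {mpoly A[k]}.
Local Notation P := {mpoly S[k]}.
Implicit Types (p q r : P) (s : S) (i : 'I_k).

HB.instance Definition _ := GRing.RMorphism.copy (@tau A k) (mshift (fun i => 'X_i : S)).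

Definition untau : P -> P := mshift (fun i => - 'X_i : S).

HB.instance Definition _ := GRing.RMorphism.on untau.

Lemma tauK : cancel (@tau A k) untau.
Proof. exact: mshiftK. Qed.

Lemma untauK : cancel untau (@tau A k).
Proof. by apply: mshiftK => i; rewrite opprK. Qed.

Lemma tauC s : tau (s%:MP : P) = s%:MP.
Proof. exact: mshiftC. Qed.

Lemma tauZ s q : tau (s *: q) = s *: tau q.
Proof. exact: mshiftZ. Qed.

Lemma untauZ s q : untau (s *: q) = s *: untau q.
Proof. exact: mshiftZ. Qed.

Lemma tauX i : tau ('X_i : P) = 'X_i + xP A i.
Proof. exact: mshiftX. Qed.

Lemma tau_yx i : tau (yP A i - xP A i) = 'X_i.
Proof. by rewrite rmorphB /= tauX tauC addrK. Qed.

Lemma untauX i : untau 'X_i = yP A i - xP A i.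
Proof. by rewrite /untau mshiftX mpolyCN. Qed.

Lemma inDeltaP q : inDelta n q <-> Xpow_ideal n (tau q).
Proof.
split=> [[c ->] | [c tau_q]].
  exists (fun i => tau (c i)); rewrite rmorph_sum; apply: eq_bigr => i _.
  by rewrite rmorphM rmorphXn /= tau_yx.
exists (fun i => untau (c i)); rewrite -[q]tauK tau_q rmorph_sum.
by apply: eq_bigr => i _; rewrite rmorphM rmorphXn /= untauX.
Qed.

Lemma inDeltaMl r q : inDelta n q -> inDelta n (r * q).
Proof. by rewrite !inDeltaP rmorphM; apply: Xpow_idealMl. Qed.

Lemma gammaE p q : gamma n p q = (tau (p * q))@_(mtop k n).
Proof.
rewrite /gamma rmorphM /= [tau p in RHS]mpolyE mulr_suml raddf_sum /= big_mkcond /=.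
apply: eq_bigr => a _; rewrite -scalerAl mcoeffZ (mulrC 'X_[a]) mcoeffMX_if.
by rewrite lem_mtop mcompl_mtop; case: ifP; rewrite ?mulr0 // mulrC.
Qed.

Lemma gammaC p q : gamma n p q = gamma n q p.
Proof. by rewrite !gammaE mulrC. Qed.

Lemma gamma_Delta p q : inDelta n p -> gamma n p q = 0.
Proof.
move=> /(inDeltaMl q)/inDeltaP/Xpow_idealP; rewrite gammaE mulrC; apply.
by apply/mnm_lepP.
Qed.

Lemma gammaD p1 p2 q : gamma n (p1 + p2) q = gamma n p1 q + gamma n p2 q.
Proof. by rewrite !gammaE mulrDl rmorphD mcoeffD. Qed.

Lemma gammaZ s p q : gamma n (s *: p) q = s * gamma n p q.
Proof. by rewrite !gammaE -scalerAl tauZ mcoeffZ. Qed.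

Lemma gammaMl r p q : gamma n (r * p) q = gamma n p (r * q).
Proof. by rewrite !gammaE mulrCA mulrA. Qed.

Lemma gamma_SHom p : SHom n (gamma n p).
Proof.
split=> [s q r | q Dq]; last by rewrite gammaC gamma_Delta.
by rewrite !(gammaC p) gammaD gammaZ.
Qed.

Lemma gamma_untau_dual a q :
  (a <= mtop k n)%MM -> gamma n (untau 'X_[mtop k n - a]) q = (tau q)@_a.
Proof.
move=> le_a; rewrite gammaE rmorphM /= untauK mulrC mcoeffMX_if lem_subr.
by rewrite mtop_subK.
Qed.

Lemma gamma_inj p : (forall q, gamma n p q = 0) -> inDelta n p.
Proof.
move=> gp0; apply/inDeltaP/Xpow_idealP => a le_a.
by rewrite -(gamma_untau_dual p le_a) gammaC gp0.
Qed.

Section SHomTheory.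
Variable phi : P -> S.
Hypothesis phiH : SHom n phi.

Lemma SHom0 : phi 0 = 0.
Proof. by have := phiH.1 (-1) 0 0; rewrite scaler0 addr0 mulN1r addNr. Qed.

Lemma SHomD p q : phi (p + q) = phi p + phi q.
Proof. by have := phiH.1 1 p q; rewrite scale1r mul1r. Qed.

Lemma SHomZ s p : phi (s *: p) = s * phi p.
Proof. by have := phiH.1 s p 0; rewrite !addr0 SHom0 addr0. Qed.

Lemma SHom_sum (I : Type) (r : seq I) (F : I -> P) :
  phi (\sum_(i <- r) F i) = \sum_(i <- r) phi (F i).
Proof. exact: (big_morph phi SHomD SHom0). Qed.

Lemma SHom_Delta p d : inDelta n d -> phi (p + d) = phi p.
Proof. by move=> Dd; rewrite SHomD (phiH.2 d Dd) addr0. Qed.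

Lemma SHom_expand q :
  phi q = \sum_(f : box k n) (tau q)@_(mnm_of_box f) * phi (untau 'X_[mnm_of_box f]).
Proof.
set t := untau (mtrunc n (tau q)).
have Dq : inDelta n (q - t).
  by rewrite inDeltaP rmorphB /= untauK; apply: Xpow_ideal_mtrunc.
rewrite -[q in LHS](subrK t) addrC SHom_Delta // /t rmorph_sum /= SHom_sum.
by apply: eq_bigr => f _; rewrite untauZ SHomZ.
Qed.

End SHomTheory.

Lemma gamma_surj phi : SHom n phi -> exists p, forall q, gamma n p q = phi q.
Proof.
move=> phiH; pose e (f : box k n) := mnm_of_box f.
exists (\sum_f phi (untau 'X_[e f]) *: untau 'X_[mtop k n - e f]) => q.
rewrite gammaC (SHom_sum (gamma_SHom q)) (SHom_expand phiH q).
apply: eq_bigr => f _; rewrite (SHomZ (gamma_SHom q)) gammaC.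
by rewrite gamma_untau_dual ?mnm_of_box_le // mulrC.
Qed.

End Gamma.

Section Rho.
Context (A : comNzRingType) (k n : nat).
Local Notation S := {mpoly A[k]}.
Local Notation P := {mpoly S[k]}.
Implicit Types (p q : P) (s : S) (phi : P -> S) (de : S -> S).

HB.instance Definition _ := GRing.RMorphism.copy (@rho A k) (map_mpoly (@mpolyC k A)).

Lemma rhoX m : rho ('X_[m] : S) = 'X_[m].
Proof. exact: map_mpolyX. Qed.

Lemma rhoZ a s : rho (a *: s) = (a%:MP : S) *: rho s.
Proof. exact: map_mpolyZ. Qed.

Lemma SHom_mpolyE phi : SHom n phi ->
  forall q, phi q = \sum_(m <- msupp q) q@_m * phi 'X_[m].
Proof.
move=> phiH q; rewrite [q in LHS]mpolyE (SHom_sum phiH).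
by apply: eq_bigr => m _; rewrite (SHomZ phiH).
Qed.

Lemma actEnd_rhostar phi p s :
  SHom n phi -> actEnd p (rhostar phi) s = phi (p * rho s).
Proof.
move=> phiH; rewrite [p in RHS]mpolyE mulr_suml (SHom_sum phiH).
by apply: eq_bigr => m _; rewrite /rhostar rmorphM /= rhoX -scalerAl (SHomZ phiH).
Qed.

Lemma rhostar_Dn phi : SHom n phi -> Dn n (rhostar phi).
Proof.
move=> phiH; split=> [a s t | p Dp s].
  by rewrite /rhostar rmorphD /= rhoZ phiH.1 mul_mpolyC.
rewrite actEnd_rhostar // phiH.2 //.
case: Dp => c ->; exists (fun i => c i * rho s); rewrite mulr_suml.
by apply: eq_bigr => i _; rewrite mulrAC.
Qed.

Lemma rhostar_inj phi psi : SHom n phi -> SHom n psi ->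
  (forall s, rhostar phi s = rhostar psi s) -> forall q, phi q = psi q.
Proof.
move=> phiH psiH eq_rho q; rewrite (SHom_mpolyE phiH) (SHom_mpolyE psiH).
by apply: eq_bigr => m _; have := eq_rho 'X_[m]; rewrite /rhostar rhoX => ->.
Qed.

Lemma actEndE p de s b : (msize p <= b)%N ->
  actEnd p de s = \sum_(m : 'X_{1..k < b}) p@_m * de ('X_[m] * s).
Proof.
move=> le_pb; pose I : subFinType _ := 'X_{1..k < b}.
rewrite /actEnd (big_mksub I) ?msupp_uniq //=; first last.
  by move=> m /msize_mdeg_lt /leq_trans; apply.
by rewrite big_rmcond //= => m /memN_msupp_eq0 ->; rewrite mul0r.
Qed.

Lemma actEnd_linear de s c p q :
  actEnd (c *: p + q) de s = c * actEnd p de s + actEnd q de s.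
Proof.
pose_big_enough b.
  rewrite !(@actEndE _ _ _ b) // mulr_sumr -big_split; apply: eq_bigr => m _.
  by rewrite mcoeffD mcoeffZ mulrDl mulrA.
by close.
Qed.

Lemma rhostar_surj de : Dn n de ->
  exists phi, SHom n phi /\ forall s, rhostar phi s = de s.
Proof.
case=> de_lin de_Delta; have phiH : SHom n (fun q => actEnd q de 1).
  by split=> [c p q | p Dp]; [apply: actEnd_linear | apply: de_Delta].
exists (fun q => actEnd q de 1); split=> // s.
have de0 : de 0 = 0 by have := de_lin (-1) 0 0; rewrite scaler0 addr0 scaleN1r addNr.
have deD s1 s2 : de (s1 + s2) = de s1 + de s2 by have := de_lin 1 s1 s2; rewrite !scale1r.
have deZ a s1 : de (a *: s1) = a *: de s1.
  by have := de_lin a s1 0; rewrite !addr0 de0 addr0.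
rewrite /rhostar [s in RHS]mpolyE (big_morph de deD de0) [s in LHS]mpolyE.
rewrite rmorph_sum /= (SHom_sum phiH); apply: eq_bigr => m _.
rewrite rhoZ rhoX (SHomZ phiH) /actEnd msuppX big_seq1 mcoeffX eqxx mul1r mulr1.
by rewrite deZ mul_mpolyC.
Qed.

End Rho.

Theorem proposition3p1 (A : comRingType) (d n : nat) :
  let k := d.+1 in
  (* gamma_n is a well-defined isomorphism of P-modules P^[n] -> Hom_S(P^[n],S) *)
  ((forall p : Ppoly A k, SHom n (gamma n p)) /\
   (forall p : Ppoly A k, inDelta n p -> forall q, gamma n p q = 0) /\
   (forall (p1 p2 : Ppoly A k) q, gamma n (p1 + p2) q = gamma n p1 q + gamma n p2 q) /\
   (forall (r p : Ppoly A k) q, gamma n (r * p) q = actHom r (gamma n p) q) /\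
   (forall p : Ppoly A k, (forall q, gamma n p q = 0) -> inDelta n p) /\
   (forall phi : Ppoly A k -> Spoly A k, SHom n phi ->
      exists p, forall q, gamma n p q = phi q)) /\
  (* varrho^* is an isomorphism of P-modules Hom_S(P^[n],S) -> D^[n]_{S|A} *)
  ((forall phi : Ppoly A k -> Spoly A k, SHom n phi -> Dn n (rhostar phi)) /\
   (forall phi psi : Ppoly A k -> Spoly A k, SHom n phi -> SHom n psi ->
      forall s, rhostar (fun q => phi q + psi q) s = rhostar phi s + rhostar psi s) /\
   (forall (r : Ppoly A k) (phi : Ppoly A k -> Spoly A k), SHom n phi ->
      forall s, rhostar (actHom r phi) s = actEnd r (rhostar phi) s) /\
   (forall phi psi : Ppoly A k -> Spoly A k, SHom n phi -> SHom n psi ->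
      (forall s, rhostar phi s = rhostar psi s) -> forall q, phi q = psi q) /\
   (forall delta : Spoly A k -> Spoly A k, Dn n delta ->
      exists phi, SHom n phi /\ forall s, rhostar phi s = delta s)).
Proof.
move=> k; split.
  split; first exact: gamma_SHom.
  split; first by move=> p Dp q; apply: gamma_Delta.
  split; first exact: gammaD.
  split; first exact: gammaMl.
  split; first exact: gamma_inj.
  exact: gamma_surj.
split; first exact: rhostar_Dn.
split; first by [].
split; first by move=> r phi phiH s; rewrite (actEnd_rhostar _ _ phiH).
split; first exact: rhostar_inj.
exact: rhostar_surj.
Qed.
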